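(* Let $\mathcal{I}_{\textsf{BPP}}$ be an instance of the BPP, and consider a solution for $\mathcal{I}_{\textsf{BPP}}$ where $k$ bins are used. If $\mathcal{I}_{\textsf{EVSP}} = f(\mathcal{I}_{\textsf{BPP}})$, then there is a solution for $\mathcal{I}_{\textsf{EVSP}}$ such that $k$ vehicles are used to serve all item customers.
   Context: The electric vehicle sharing problem (EVSP): there is a set of stations, each with a capacity (number of parking spaces) and a number of charging facilities; a fleet of identical electric vehicles with battery capacity $\textsf{L}$ initially located at stations; and a set of customers, each with a set of driving demands $(s^{\text{out}}, t_i, s^{\text{in}}, t_j, \varepsilon)$ (pick-up station, departure time, drop-off station, arrival time, required energy). A demand is fulfilled by a vehicle if the vehicle is at the pick-up station at time $t_i$, its battery energy is at least $\varepsilon$, and there is a free parking space at the drop-off station; the vehicle's energy decreases by $\varepsilon$ and increases only by charging at a charging facility. A customer is served iff all its demands are fulfilled; the objective is to maximize the total rental time $\sum (t_j - t_i)$ over demands of served customers. The one-dimensional bin packing problem (BPP): given items $\mathcal{N} = \{1,\dots,n\}$ with sizes $\ell_i \in (0,1]$, find a partition $\{\mathcal{N}_1,\dots,\mathcal{N}_k\}$ of $\mathcal{N}$ such that the sizes in each part sum to at most $1$ and $k$ is minimized. The reduction $f$ maps a BPP instance $\mathcal{I}_{\textsf{BPP}}$ to the EVSP instance $\mathcal{I}_{\textsf{EVSP}}$ with $2n$ customers, each having a single demand: there is a single station $s$ with capacity $n$ and no charging facilities; there are $n$ fully charged vehicles initially at $s$, each with battery capacity $\textsf{L} = 1$; for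 each item $i \in \mathcal{N}$ there is an item customer with the single demand $(s, 2i, s, 2i+1, \ell_i)$; and there are $n$ dummy customers, each with the single demand $(s, 1, s, 2, \textsf{L})$. Each customer contributes rental time $1$ to the objective, so maximizing total rental time is equivalent to maximizing the number of served customers. *)

From HB Require Import structures.
From mathcomp Require Import all_boot all_order all_algebra.
Set Implicit Arguments. Unset Strict Implicit. Unset Printing Implicit Defensive.
Import Order.TTheory GRing.Theory Num.Theory.
Local Open Scope ring_scope.

Definition bpp_instance (R : realFieldType) (n : nat) (l : 'I_n -> R) : Prop :=
  forall i, 0 < l i <= 1.

(* A (feasible) BPP solution: a partition P of the item set whose blocks
   (the bins) have total size at most 1.  The number of bins used is #|P|. *)
Definition bpp_solution (R : realFieldType) (n : nat) (l : 'I_n -> R)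
    (P : {set {set 'I_n}}) : Prop :=
  partition P [set: 'I_n] /\ (forall B, B \in P -> \sum_(i in B) l i <= 1).

Record demand (ns : nat) (R : Type) := Demand {
  d_out : 'I_ns;   (* pick-up station *)
  d_dep : nat;     (* departure time *)
  d_in  : 'I_ns;   (* drop-off station *)
  d_arr : nat;     (* arrival time *)
  d_eps : R        (* required energy *)
}.

Record evsp (R : realFieldType) := EVSP {
  nst    : nat;                       (* stations 'I_nst *)
  cap    : 'I_nst -> nat;             (* parking spaces *)
  nchg   : 'I_nst -> nat;             (* charging facilities *)
  batL   : R;                         (* battery capacity L *)
  rate   : R;                         (* energy charged per time unit *)
  nveh   : nat;                       (* vehicles 'I_nveh *)
  v_init : 'I_nveh -> 'I_nst;         (* initial station *)
  e_init : 'I_nveh -> R;              (* initial energy *)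
  ncust  : nat;                       (* customers 'I_ncust *)
  dem    : 'I_ncust -> seq (demand nst R)  (* demands of each customer *)
}.

Arguments cap {R} e _.
Arguments nchg {R} e _.
Arguments v_init {R} e _.
Arguments e_init {R} e _.
Arguments dem {R} e _.

Section EVSPSemantics.
Variables (R : realFieldType) (I : evsp R).

Definition getd (c : 'I_(ncust I)) (j : 'I_(size (dem I c))) : demand (nst I) R :=
  tnth (in_tuple (dem I c)) j.
Arguments getd c j : clear implicits.

(* A solution: which vehicle fulfills which demand, together with the
   (discrete-time) trajectory of each vehicle: its position at each time
   (None = on the road), its energy, and whether it is charging during
   [t, t+1). *)
Record solution := Solution {
  asg : forall c : 'I_(ncust I), 'I_(size (dem I c)) -> option 'I_(nveh I);
  pos : 'I_(nveh I) -> nat -> option 'I_(nst I);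
  en  : 'I_(nveh I) -> nat -> R;
  chg : 'I_(nveh I) -> nat -> bool
}.
Arguments asg s c _ : clear implicits.
Arguments pos s v t.
Arguments en s v t.
Arguments chg s v t.

Variable S : solution.

Definition driving (v : 'I_(nveh I)) (t : nat) : Prop :=
  exists (c : 'I_(ncust I)) (j : 'I_(size (dem I c))), asg S c j = Some v /\ (d_dep (getd c j) <= t < d_arr (getd c j))%N.

Definition feasible : Prop :=
  (forall v, pos S v 0 = Some (v_init I v) /\ en S v 0 = e_init I v) /\
  (forall v t, 0 <= en S v t <= batL I) /\
  (forall c j v, asg S c j = Some v ->
     let d := getd c j in
     [/\ (d_dep d < d_arr d)%N,
         pos S v (d_dep d) = Some (d_out d),
         pos S v (d_arr d) = Some (d_in d),
         (forall t, (d_dep d < t < d_arr d)%N -> pos S v t = None) &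
         (d_eps d <= en S v (d_dep d) /\
          en S v (d_arr d) = en S v (d_dep d) - d_eps d)]) /\
  (* a vehicle fulfills at most one demand at a time *)
  (forall c j c' j' v, asg S c j = Some v -> asg S c' j' = Some v ->
     (c != c') || (val j != val j') ->
     (d_arr (getd c j) <= d_dep (getd c' j'))%N \/
     (d_arr (getd c' j') <= d_dep (getd c j))%N) /\
  (* when not driving, a vehicle stays parked; its energy increases only by
     charging *)
  (forall v t, ~ driving v t ->
     exists s, [/\ pos S v t = Some s, pos S v t.+1 = Some s &
       en S v t <= en S v t.+1 <= en S v t + (if chg S v t then rate I else 0)]) /\
  (forall s t, (#|[set v | chg S v t & pos S v t == Some s]| <= nchg I s)%N) /\
  (forall s t, (#|[set v | pos S v t == Some s]| <= cap I s)%N).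

Definition served (c : 'I_(ncust I)) : Prop :=
  forall j, asg S c j <> None.

End EVSPSemantics.
Arguments asg {R I} s c j.
Arguments getd {R} I c j.
Arguments pos {R I} s v t.
Arguments en {R I} s v t.
Arguments chg {R I} s v t.
Arguments feasible {R I} S.
Arguments served {R I} S c.

(* Customers 'I_(n + n): lshift n i (i : 'I_n) is the item customer of item
   i (items are 0-indexed, so item i has demand (s, 2(i+1), s, 2(i+1)+1, l i));
   rshift n _ are the n dummy customers with demand (s, 1, s, 2, L). *)
Definition reduction (R : realFieldType) (n : nat) (l : 'I_n -> R) : evsp R :=
  @EVSP R 1 (fun _ => n) (fun _ => 0%N) 1 1 n (fun _ => ord0) (fun _ => 1)
    (n + n)
    (fun c => match split c with
              | inl i => [:: Demand ord0 (2 * i.+1) ord0 (2 * i.+1).+1 (l i)]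
              | inr _ => [:: Demand ord0 1 ord0 2 1]
              end).

Definition item_vehicles (R : realFieldType) (n : nat) (l : 'I_n -> R)
    (S : solution (reduction l)) : {set 'I_(nveh (reduction l))} :=
  [set v | [exists i : 'I_n, [exists j, asg S (lshift n i) j == Some v]]].

(* Serve the items of each bin by one vehicle, named after a representative
   item of the bin (a transversal of the partition), so that exactly #|P|
   vehicles are used; dummy customers are left unserved.  Item i is driven
   during the slot [2(i+1), 2(i+1)+1], so no two item trips overlap, and the
   charge of a vehicle at time t is 1 minus the sizes of the items of its bin
   already delivered, which stays in [0, 1] because the bin has size at most 1. *)

From mathcomp Require Import all_boot all_order all_algebra zify.
Import Order.TTheory GRing.Theory Num.Theory.
Set Implicit Arguments. Unset Strict Implicit. Unset Printing Implicit Defensive.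
Local Open Scope ring_scope.

Lemma ler_sum_subpred (R : numDomainType) (I : finType) (P Q : pred I)
    (F : I -> R) :
  (forall i, P i -> 0 <= F i) -> \sum_(i | P i && Q i) F i <= \sum_(i | P i) F i.
Proof.
move=> F_ge0; rewrite [leRHS](bigID Q) /= lerDl.
by apply: sumr_ge0 => i /andP[/F_ge0].
Qed.

Section PartitionRepresentative.
Variables (T : finType) (P : {set {set T}}).
Hypothesis partP : partition P [set: T].

Let X := transversal P [set: T].
Let trX : is_transversal X P [set: T] := transversalP partP.

Definition pblock_repr (x : T) : T := transversal_repr x X (pblock P x).

Lemma pblock_mem_setT x : pblock P x \in P.
Proof. by case/and3P: partP => /eqP covP _ _; rewrite pblock_mem // covP inE. Qed.

Lemma pblock_reprK x : pblock P (pblock_repr x) = pblock P x.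
Proof. exact: (transversal_reprK trX _ (pblock_mem_setT x)). Qed.

Lemma eq_pblock_repr x y : (pblock_repr y == pblock_repr x) = (y \in pblock P x).
Proof.
case/and3P: partP => /eqP covP tiP _.
rewrite -eq_pblock ?covP ?inE //; apply/eqP/eqP => [eq_yx | eq_xy].
  by rewrite -pblock_reprK -eq_yx pblock_reprK.
rewrite /pblock_repr -eq_xy; apply/set1_inj.
by rewrite -!(setI_transversal_pblock trX) // pblock_mem_setT.
Qed.

Lemma card_pblock_repr : #|pblock_repr @: [set: T]| = #|P|.
Proof.
rewrite -(card_transversal trX); suff -> : pblock_repr @: [set: T] = X by [].
apply/setP => x; apply/imsetP/idP => [[y _ ->] | Xx].
  exact/(repr_mem_transversal trX)/pblock_mem_setT.
by exists x; rewrite // /pblock_repr (pblockK trX).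
Qed.

End PartitionRepresentative.

Lemma bin_load_le1 (R : realFieldType) (n : nat) (l : 'I_n -> R) P :
  bpp_solution l P -> forall v, \sum_(i | pblock_repr P i == v) l i <= 1.
Proof.
case=> partP binP v.
case: (pickP (fun i => pblock_repr P i == v)) => [i /eqP <- | none].
  by under eq_bigl do rewrite (eq_pblock_repr partP); exact/binP/pblock_mem_setT.
by rewrite big_pred0 // ler01.
Qed.

Lemma split_lshift m n (i : 'I_m) : split (lshift n i) = inl i.
Proof. exact: (unsplitK (inl i)). Qed.

Section ReductionDemands.
Variables (R : realFieldType) (n : nat) (l : 'I_n -> R).

Lemma size_dem_reduction c : size (dem (reduction l) c) = 1%N.
Proof. by rewrite /=; case: (split c). Qed.

Lemma reduction_demand_index0 c (j : 'I_(size (dem (reduction l) c))) :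
  nat_of_ord j = 0%N.
Proof. by move: (nat_of_ord j) (ltn_ord j); rewrite size_dem_reduction; case. Qed.

Lemma getd_reduction_item c j i : split c = inl i ->
  getd (reduction l) c j = Demand ord0 (2 * i.+1) ord0 (2 * i.+1).+1 (l i).
Proof.
move=> Ec; rewrite /getd (tnth_nth (Demand ord0 0 ord0 0 0)).
by rewrite reduction_demand_index0 /= Ec.
Qed.

End ReductionDemands.

Section Fleet.
Variables (R : realFieldType) (n : nat) (l : 'I_n -> R) (vehicle : 'I_n -> 'I_n).
Hypothesis l_ge0 : forall i, 0 <= l i.
Hypothesis load_le1 : forall v, \sum_(i | vehicle i == v) l i <= 1.

Definition fleet_energy (v : 'I_n) (t : nat) : R :=
  1 - \sum_(i | (vehicle i == v) && (2 * i.+1 < t)%N) l i.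

Definition fleet_solution : solution (reduction l) :=
  @Solution R (reduction l)
    (fun c _ => if split c is inl i then Some (vehicle i) else None)
    (fun _ _ => Some ord0) fleet_energy (fun _ _ => false).

Lemma fleet_energy0 v : fleet_energy v 0 = 1.
Proof. by rewrite /fleet_energy big_pred0 ?subr0 // => i; rewrite andbF. Qed.

Lemma fleet_energyS v t : fleet_energy v t.+1 =
  fleet_energy v t - \sum_(i | (vehicle i == v) && (2 * i.+1 == t)%N) l i.
Proof.
rewrite /fleet_energy (bigID (fun i : 'I_n => 2 * i.+1 == t)%N) /=.
rewrite opprD addrA addrAC.
by congr (1 - _ - _); apply: eq_bigl => i; rewrite -andbA; congr (_ && _); lia.
Qed.

Lemma fleet_energy_bounds v t : 0 <= fleet_energy v t <= 1.
Proof.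
rewrite subr_ge0 lerBlDr lerDl sumr_ge0 ?andbT => [|i _]; last exact: l_ge0.
apply: le_trans (load_le1 v); exact: ler_sum_subpred.
Qed.

Lemma fleet_energy_idle v t : (forall i, vehicle i = v -> (2 * i.+1 != t)%N) ->
  fleet_energy v t.+1 = fleet_energy v t.
Proof.
move=> idle; rewrite fleet_energyS big_pred0 ?subr0 // => i.
by apply/andP => -[/eqP/idle/negP].
Qed.

Lemma fleet_energy_trip i :
  fleet_energy (vehicle i) (2 * i.+1).+1
  = fleet_energy (vehicle i) (2 * i.+1) - l i.
Proof.
rewrite fleet_energyS (big_pred1 i) // => j /=.
by apply/andP/eqP => [[_ /eqP e] | ->]; [apply: ord_inj; lia | rewrite !eqxx].
Qed.

Definition item_demand_index i : 'I_(size (dem (reduction l) (lshift n i))) :=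
  cast_ord (esym (size_dem_reduction (lshift n i))) ord0.

Lemma fleet_driving i : driving fleet_solution (vehicle i) (2 * i.+1).
Proof.
exists (lshift n i), (item_demand_index i).
rewrite /= split_lshift (getd_reduction_item _ (split_lshift n i)) /=.
by rewrite leqnn ltnSn.
Qed.

Lemma fleet_feasible : feasible fleet_solution.
Proof.
split; [|split; [|split; [|split; [|split; [|split]]]]].
- by move=> v; rewrite /= fleet_energy0.
- by move=> v t; exact: fleet_energy_bounds.
- move=> c j v /=; case Ec: (split c) => [i|//] [<-].
  rewrite (getd_reduction_item _ Ec) /=; split=> //; first by move=> t; lia.
  have := fleet_energy_bounds (vehicle i) (2 * i.+1).+1.
  by rewrite fleet_energy_trip subr_ge0 => /andP[-> _].
- move=> c j c' j' v /=; rewrite !reduction_demand_index0 orbF.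
  case Ec: (split c) => [i|//] _; case Ec': (split c') => [i'|//] _.
  rewrite (getd_reduction_item _ Ec) (getd_reduction_item _ Ec') /=.
  have {Ec Ec'} -> : (c != c') = (i != i').
    by rewrite -(splitK c) -(splitK c') Ec Ec' (can_eq (@unsplitK _ _)) /=.
  move/eqP/val_eqP => /= ne; lia.
- move=> v t not_driving; exists ord0; split=> //=.
  rewrite fleet_energy_idle ?addr0 ?lexx // => i vi; apply/eqP => ti.
  by apply: not_driving; rewrite -vi -ti; exact: fleet_driving.
- by move=> s t; rewrite leqn0 cards_eq0; apply/eqP/setP => v; rewrite !inE.
- by move=> s t; apply: leq_trans (max_card _) _; rewrite card_ord.
Qed.

Lemma fleet_serves_item i : served fleet_solution (lshift n i).
Proof. by move=> j; rewrite /= split_lshift. Qed.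

Lemma item_vehicles_fleet : item_vehicles fleet_solution = vehicle @: [set: 'I_n].
Proof.
apply/setP => v; rewrite inE.
apply/existsP/imsetP => [[i /existsP[j]] | [i _ ->]].
  by rewrite /= split_lshift => /eqP[<-]; exists i; rewrite ?inE.
by exists i; apply/existsP; exists (item_demand_index i); rewrite /= split_lshift.
Qed.

End Fleet.

Theorem proposition5 (R : realFieldType) (n : nat) (l : 'I_n -> R)
    (P : {set {set 'I_n}}) (k : nat) :
  bpp_instance l -> bpp_solution l P -> #|P| = k ->
  exists S : solution (reduction l),
    [/\ feasible S,
        (forall i : 'I_n, served S (lshift n i)) &
        #|item_vehicles S| = k].
Proof.
move=> sizes binsP <-; have l_ge0 i : 0 <= l i by case/andP: (sizes i) => /ltW.
exists (fleet_solution l (pblock_repr P)); split.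
- exact: fleet_feasible l_ge0 (bin_load_le1 binsP).
- exact: fleet_serves_item.
- by rewrite item_vehicles_fleet (card_pblock_repr binsP.1).
Qed.
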